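(* Let $k\ge1$ and let $m>3$ be a vertex of the finite tree $\mathcal{T}_{2,3}^k$. Then the number of children of $m$ in $\mathcal{T}_{2,3}^k$ equals $$\sum_{j=0}^{\lfloor m/4\rfloor}\binom{k}{j}\binom{k-j}{m-4j}.$$
   Context: For integers $b>1$, $e>1$ and a positive integer $n=\sum_{i=0}^{r} d_i b^i$ written in base $b$ (digits $0\le d_i\le b-1$), the $e$-power base-$b$ happy function is $S_{e,b}(n)=\sum_{i=0}^{r} d_i^e$. A positive integer $n$ is $e$-power $b$-happy if $S_{e,b}^{\ell}(n)=1$ for some $\ell\ge 1$. The tree $\mathcal{T}_{e,b}$ has as vertices all $e$-power $b$-happy numbers, with root $1$; a happy number $n\neq 1$ is a child of the vertex $S_{e,b}(n)$. For $k\ge1$, $\mathcal{T}_{e,b}^k$ is the subtree on the happy numbers having at most $k$ digits in base $b$ (i.e. $n<b^k$); thus the children of a vertex $m$ in $\mathcal{T}_{e,b}^k$ are the happy integers $n$ with $1\le n<b^k$, $n\neq1$, and $S_{e,b}(n)=m$. Binomial coefficients $\binom{a}{c}$ are taken to be $0$ when $c<0$ or $c>a$ (including when $a<0$). *)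

From mathcomp Require Import all_boot.
Set Implicit Arguments. Unset Strict Implicit. Unset Printing Implicit Defensive.

(* Sum of e-th powers of the base-b digits of n; fuel = n suffices for b > 1. *)
Fixpoint digpow_aux (fuel e b n : nat) : nat :=
  match fuel with
  | 0 => 0
  | f.+1 => if n == 0 then 0 else (n %% b) ^ e + digpow_aux f e b (n %/ b)
  end.

Definition S_eb (e b n : nat) : nat := digpow_aux n e b n.

Definition happy (e b n : nat) : Prop :=
  0 < n /\ exists l, 0 < l /\ iter l (S_eb e b) n = 1.

(* vertices of T^k_{e,b}: happy numbers with at most k base-b digits *)
Definition vertex_k (e b k m : nat) : Prop := happy e b m /\ m < b ^ k.

Definition child_k (e b k m n : nat) : Prop :=
  happy e b n /\ 1 <= n /\ n < b ^ k /\ n <> 1 /\ S_eb e b n = m.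

Definition num_children_k (e b k m c : nat) : Prop :=
  exists s : seq nat, uniq s /\ size s = c /\ (forall n, n \in s <-> child_k e b k m n).

(** The children of [m] in the 3-ary tree of depth [k] are the [n < 3^k]
    with [S n = m] (they are automatically happy, and [n <> 0, 1] since
    [S 0 = 0] and [S 1 = 1]).  Appending a ternary digit [d] to [n] adds
    [d^2 \in {0, 1, 4}] to [S n], so the number of such [n] satisfies
    [N (k+1) m = N k m + N k (m-1) + N k (m-4)].  The sum of trinomial
    coefficients [C(k,j) C(k-j,i)] over [i + 4j = m], which counts the digit
    strings of length [k] with [j] twos and [i] ones, satisfies the same
    recurrence by Pascal's rule, with the same initial values. *)

From mathcomp Require Import all_boot zify.

Lemma sum_nat_digits b N (F : nat -> nat) :
  \sum_(0 <= n < N * b) F n = \sum_(0 <= q < N) \sum_(0 <= d < b) F (d + q * b).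
Proof.
rewrite big_nat_mul; apply: eq_bigr => q _.
by rewrite -{1}[q * b]add0n big_addn mulSn addnK.
Qed.

Lemma happy_of_S e b n : 0 < n -> happy e b (S_eb e b n) -> happy e b n.
Proof.
move=> n_gt0 [_ [l [l_gt0 itl]]]; split=> //.
by exists l.+1; rewrite iterSr.
Qed.

Section DigitPowerSum.

Variables e b : nat.
Hypotheses (e_gt0 : 0 < e) (b_gt1 : 1 < b).

Local Notation S := (S_eb e b).

Lemma digpow_aux_fuel f1 f2 n :
  n <= f1 -> n <= f2 -> digpow_aux f1 e b n = digpow_aux f2 e b n.
Proof.
elim: f1 f2 n => [|f1 IH] [|f2] n /=; rewrite ?leqn0.
- by [].
- by move=> /eqP ->.
- by move=> _ /eqP ->.
move=> n_le1 n_le2; case: eqP => // /eqP n_neq0.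
have n_div_lt : n %/ b < n by apply: ltn_Pdiv => //; lia.
by congr (_ + _); apply: IH; lia.
Qed.

Lemma S_eb_rec n : S n = (n %% b) ^ e + S (n %/ b).
Proof.
case: n => [|n]; first by rewrite mod0n div0n exp0n.
rewrite /S_eb /=; congr (_ + _).
have lt_div : n.+1 %/ b < n.+1 by apply: ltn_Pdiv; lia.
by apply: digpow_aux_fuel; lia.
Qed.

Lemma S_eb_digit q d : d < b -> S (d + q * b) = d ^ e + S q.
Proof.
move=> d_lt_b; rewrite S_eb_rec [d + _]addnC modnMDl modn_small // divnMDl; last lia.
by rewrite divn_small // addn0.
Qed.

Lemma S_eb1 : S 1 = 1.
Proof. by rewrite S_eb_rec modn_small // divn_small // exp1n. Qed.

Definition num_preimages k m := \sum_(0 <= n < b ^ k) (S n == m).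

Lemma num_preimagesS k m :
  num_preimages k.+1 m =
  \sum_(0 <= d < b) (if d ^ e <= m then num_preimages k (m - d ^ e) else 0).
Proof.
rewrite /num_preimages expnSr sum_nat_digits exchange_big_nat.
apply: eq_big_nat => d /andP[_ d_lt_b].
under eq_bigr => q _ do rewrite S_eb_digit //.
case: leqP => [de_le_m | m_lt_de]; last by rewrite big1 // => q _; case: eqP; lia.
by apply: eq_bigr => q _; apply/eqP/eqP; lia.
Qed.

Lemma num_children_preimages k m :
  happy e b m -> m <> 1 -> num_children_k e b k m (num_preimages k m).
Proof.
move=> m_happy m_neq1; have [m_gt0 _] := m_happy.
exists [seq n <- iota 0 (b ^ k) | S n == m]; split; [|split].
- by rewrite filter_uniq // iota_uniq.
- rewrite size_filter -sum1_count big_mkcond /num_preimages /index_iota subn0.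
  by apply: eq_bigr => n _; case: eqP.
move=> n; rewrite mem_filter mem_iota add0n; split.
- case/andP=> /eqP Sn n_lt.
  have n_gt0 : 0 < n by case: n Sn {n_lt} => // S0; move: m_gt0; rewrite -S0.
  have n_neq1 : n <> 1 by move=> n1; apply: m_neq1; rewrite -Sn n1 S_eb1.
  by split; first apply: happy_of_S; rewrite ?Sn.
by case=> _ [_ [n_lt [_ ->]]]; rewrite eqxx n_lt.
Qed.

End DigitPowerSum.

Definition trinomial k i j := 'C(k, j) * 'C(k - j, i).

Lemma trinomialS k i j :
  trinomial k.+1 i j = trinomial k i j
    + (if 1 <= i then trinomial k (i - 1) j else 0)
    + (if 1 <= j then trinomial k i (j - 1) else 0).
Proof.
rewrite /trinomial; case: i => [|i]; case: j => [|j] /=; rewrite ?subn1 /=.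
- by rewrite !bin0.
- by rewrite !bin0 !binS; lia.
- by rewrite !bin0 !subn0 binS; lia.
rewrite subSS binS; case: (ltnP j k) => [j_lt_k | k_le_j].
  by rewrite (_ : k - j = (k - j.+1).+1) ?binS; lia.
by rewrite (bin_small (n := k)) ?ltnS.
Qed.

Section DiagonalSums.

Variable c : nat.
Hypothesis c_gt0 : 0 < c.

Definition diag_sum (F : nat -> nat -> nat) m :=
  \sum_(0 <= j < (m %/ c).+1) F (m - c * j) j.

Lemma diag_sumD F G m :
  diag_sum (fun i j => F i j + G i j) m = diag_sum F m + diag_sum G m.
Proof. exact: big_split. Qed.

Lemma diag_sum_shiftl F m :
  diag_sum (fun i j => if 1 <= i then F (i - 1) j else 0) m =
  if 1 <= m then diag_sum F (m - 1) else 0.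
Proof.
rewrite /diag_sum; case: m => [|m]; first by rewrite div0n big_nat1.
rewrite subn1 /= (big_nat_widen 0 (m %/ c).+1 (m.+1 %/ c).+1); last first.
  by rewrite ltnS leq_div2r.
rewrite [RHS]big_mkcond; apply: eq_bigr => j _.
rewrite ltnS leq_divRL //=; case: (leqP (j * c) m); rewrite [j * c]mulnC => cj_m.
  have -> : m.+1 - c * j = (m - c * j).+1 by lia.
  by rewrite subn1.
by have -> : m.+1 - c * j = 0 by lia.
Qed.

Lemma diag_sum_shiftr F m :
  diag_sum (fun i j => if 1 <= j then F i (j - 1) else 0) m =
  if c <= m then diag_sum F (m - c) else 0.
Proof.
rewrite /diag_sum big_nat_recl //= add0n; case: leqP => [c_le_m | m_lt_c].
  have -> : m %/ c = ((m - c) %/ c).+1.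
    by rewrite -[in LHS](subnK c_le_m) divnDr ?dvdnn // divnn c_gt0 addn1.
  apply: eq_bigr => j _.
  by rewrite subn1 /= mulnS subnDA.
by rewrite (divn_small m_lt_c) big_geq.
Qed.

End DiagonalSums.

Lemma diag_trinomialS c k m : 0 < c ->
  diag_sum c (trinomial k.+1) m = diag_sum c (trinomial k) m
    + (if 1 <= m then diag_sum c (trinomial k) (m - 1) else 0)
    + (if c <= m then diag_sum c (trinomial k) (m - c) else 0).
Proof.
move=> c_gt0; rewrite -diag_sum_shiftl // -diag_sum_shiftr // -!diag_sumD.
by apply: eq_bigr => j _; rewrite trinomialS.
Qed.

Lemma num_preimages_2_3 k m : num_preimages 2 3 k m = diag_sum 4 (trinomial k) m.
Proof.
elim: k m => [|k IH] m.
  rewrite /num_preimages /diag_sum big_nat1 big_nat_recl //= big1 => [|j _].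
    by rewrite /trinomial muln0 subn0 bin0 mul1n addn0 bin0n; case: m.
  by rewrite /trinomial bin0n.
rewrite num_preimagesS // diag_trinomialS // !big_nat_recl //= big_geq //.
by rewrite exp0n // exp1n -[2 ^ 2]/4 subn0 !IH addn0 addnA.
Qed.

Theorem mainTheorem3 (k m : nat) :
  1 <= k -> 3 < m -> vertex_k 2 3 k m ->
  num_children_k 2 3 k m
    (\sum_(0 <= j < (m %/ 4).+1) 'C(k, j) * 'C(k - j, m - 4 * j)).
Proof.
move=> _ m_gt3 [m_happy _].
rewrite -[\sum_(0 <= j < _) _]/(diag_sum 4 (trinomial k) m) -num_preimages_2_3.
by apply: num_children_preimages => //; lia.
Qed.
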